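(* Let $\Omega$ be a finite set, $n\ge1$, and $P_i,Q_i$ ($i=1,\dots,n$) strictly positive probability mass functions on $\Omega$. For a pair $(P,Q)$ of strictly positive probability mass functions on a finite set $\Sigma$, define its encoding $\eta_{P,Q}:=\sum_{s\in\Sigma}\sqrt{P(s)Q(s)}\,\delta_{\frac12\log\frac{P(s)}{Q(s)}}$ (a measure on $\mathbb R$, $\delta_u$ the Dirac mass at $u$), and let $\eta_i:=\eta_{P_i,Q_i}$. Define probability mass functions on $[n]\times\Omega$ by $\Lambda_P(i,\omega):=\frac1nP_i(\omega)$ and $\Lambda_Q(i,\omega):=\frac1nQ_i(\omega)$. Then the encoding $\eta_{\Lambda_P,\Lambda_Q}$ equals $\bar\eta:=\frac1n\sum_{i=1}^n\eta_i$, and consequently \[ T(\bar\eta^{*n})=\mathrm{TV}(\Lambda_P^{\otimes n},\Lambda_Q^{\otimes n}), \] where $T(\eta):=\frac12\int_{\mathbb R}|e^x-e^{-x}|\,\eta(dx)$.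
   Context: $\bar\eta^{*n}$ is the $n$-fold convolution of $\bar\eta$ with itself. $[n]=\{1,\dots,n\}$. For probability measures on a finite set, $\mathrm{TV}(\mu,\nu)=\frac12\sum|\mu(\cdot)-\nu(\cdot)|$. *)

From HB Require Import structures.
From mathcomp Require Import all_boot all_order all_algebra.
From mathcomp Require Import reals.
From mathcomp Require Import sequences exp.
Set Implicit Arguments. Unset Strict Implicit. Unset Printing Implicit Defensive.
Import Order.TTheory GRing.Theory Num.Theory.
Local Open Scope ring_scope.

(* A finitely supported (discrete) measure on R, given as a finite list of
   (weight, atom) pairs, i.e. sum_k w_k * delta_{a_k}. *)
Definition dmeas (R : realType) := seq (R * R).

Definition mass (R : realType) (eta : dmeas R) (x : R) : R :=
  \sum_(p <- eta | p.2 == x) p.1.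

Definition dmeas_eq (R : realType) (eta nu : dmeas R) : Prop :=
  forall x : R, mass eta x = mass nu x.

Definition ddirac (R : realType) (u : R) : dmeas R := [:: (1, u)].

Definition dscale (R : realType) (c : R) (eta : dmeas R) : dmeas R :=
  [seq (c * p.1, p.2) | p <- eta].

Definition dconv (R : realType) (eta nu : dmeas R) : dmeas R :=
  [seq (p.1 * q.1, p.2 + q.2) | p <- eta, q <- nu].

Definition dconv_pow (R : realType) (eta : dmeas R) (n : nat) : dmeas R :=
  iter n (dconv eta) (ddirac 0).

Definition Tfun (R : realType) (eta : dmeas R) : R :=
  2^-1 * \sum_(p <- eta) `|expR p.2 - expR (- p.2)| * p.1.

Definition encoding (R : realType) (S : finType) (P Q : S -> R) : dmeas R :=
  flatten [seq dscale (Num.sqrt (P s * Q s)) (ddirac (2^-1 * ln (P s / Q s)))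
          | s <- enum S].

Definition is_pos_pmf (R : realType) (S : finType) (P : S -> R) : Prop :=
  (forall s, 0 < P s) /\ \sum_(s : S) P s = 1.

Definition TV (R : realType) (S : finType) (mu nu : S -> R) : R :=
  2^-1 * \sum_(s : S) `|mu s - nu s|.

Definition prod_pmf (R : realType) (S : finType) (n : nat) (mu : S -> R)
  : {ffun 'I_n -> S} -> R :=
  fun x => \prod_(j < n) mu (x j).

Definition Lambda (R : realType) (Omega : finType) (n : nat)
  (P : 'I_n -> Omega -> R) : ('I_n * Omega)%type -> R :=
  fun iw => P iw.1 iw.2 / n%:R.

Definition eta_bar (R : realType) (Omega : finType) (n : nat)
  (P Q : 'I_n -> Omega -> R) : dmeas R :=
  dscale (n%:R^-1) (flatten [seq encoding (P i) (Q i) | i <- enum 'I_n]).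
Arguments prod_pmf {R S} n mu.

From HB Require Import structures.
From mathcomp Require Import all_boot all_order all_algebra.
From mathcomp Require Import reals.
From mathcomp Require Import sequences exp.
From mathcomp Require Import ring.
Import Order.TTheory GRing.Theory Num.Theory.
Local Open Scope ring_scope.

(* Writing (P, Q) through weights w = sqrt(P Q) and atoms a = 1/2 log(P/Q), one
   has P = w e^a and Q = w e^-a.  The encoding of (Lambda_P, Lambda_Q) has the
   atoms of the eta_i, with weights scaled by 1/n, hence equals eta_bar.  The
   n-fold convolution of a discrete measure indexed by s in S is indexed by
   x in S^n, with weight prod_j w (x j) and atom sum_j a (x j); on such an atom
   prod_j w (x j) |e^(sum a) - e^(-sum a)| = |prod_j P (x j) - prod_j Q (x j)|,
   so summing over x gives T(eta_bar^{*n}) = TV. *)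

Lemma big_ffunS {V : Type} {idx : V} (op : Monoid.com_law idx)
    {S : finType} {k : nat} (F : S -> {ffun 'I_k -> S} -> V) :
  \big[op/idx]_(y : {ffun 'I_k.+1 -> S}) F (y ord0) [ffun j => y (lift ord0 j)]
  = \big[op/idx]_s \big[op/idx]_x F s x.
Proof.
rewrite pair_big /=.
pose cons (p : S * {ffun 'I_k -> S}) : {ffun 'I_k.+1 -> S} :=
  [ffun j => if unlift ord0 j is Some j' then p.2 j' else p.1].
have tail_cons p : [ffun j => cons p (lift ord0 j)] = p.2.
  by apply/ffunP => j; rewrite !ffunE liftK.
have head_cons p : cons p ord0 = p.1 by rewrite ffunE unlift_none.
rewrite (reindex cons) /=; last first.
  exists (fun y => (y ord0, [ffun j => y (lift ord0 j)])).
  - by move=> [s x] _; rewrite head_cons tail_cons.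
  - move=> y _; apply/ffunP => j; rewrite ffunE.
    by case: unliftP => [j' ->|->]; rewrite ?ffunE.
by apply: eq_bigr => -[s x] _; rewrite head_cons tail_cons.
Qed.

Section DiscreteMeasures.
Context {R : realType}.

(* [L] lists, up to order, the (weight, atom) pairs (W s, A s), s in S. *)
Definition indexed_by {S : finType} (L : dmeas R) (W A : S -> R) : Prop :=
  forall G : R * R -> R, \sum_(p <- L) G p = \sum_s G (W s, A s).

Lemma big_dconv (L M : dmeas R) (G : R * R -> R) :
  \sum_(p <- dconv L M) G p =
  \sum_(p <- L) \sum_(q <- M) G (p.1 * q.1, p.2 + q.2).
Proof. by rewrite /dconv big_allpairs_dep. Qed.

Lemma dmeas_eq_indexed {S : finType} {L M : dmeas R} {W A : S -> R} :
  indexed_by L W A -> indexed_by M W A -> dmeas_eq L M.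
Proof.
move=> hL hM x; rewrite /mass big_mkcond [RHS]big_mkcond /=.
by rewrite (hL (fun p => if p.2 == x then p.1 else 0)) hM.
Qed.

Lemma Tfun_indexed {S : finType} {L : dmeas R} {W A : S -> R} :
  indexed_by L W A ->
  Tfun L = 2^-1 * \sum_s `|expR (A s) - expR (- A s)| * W s.
Proof. by move=> hL; rewrite /Tfun hL. Qed.

Lemma dconv_pow_indexed {S : finType} {L : dmeas R} {W A : S -> R} (k : nat) :
  indexed_by L W A ->
  indexed_by (dconv_pow L k)
    (fun x : {ffun 'I_k -> S} => \prod_(j < k) W (x j))
    (fun x => \sum_(j < k) A (x j)).
Proof.
move=> hL; elim: k => [|k IH] G.
  rewrite /dconv_pow /= /ddirac big_seq1.
  have x0 : {ffun 'I_0 -> S} by apply: finfun; case.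
  rewrite (big_pred1 x0) ?big_ord0 // => x /=.
  by apply/esym/eqP/ffunP; case.
rewrite /dconv_pow iterS -/(dconv_pow L k) big_dconv.
under eq_bigr => p _ do rewrite (IH (fun q => G (p.1 * q.1, p.2 + q.2))) /=.
rewrite (hL (fun p => \sum_(x : {ffun 'I_k -> S})
  G (p.1 * \prod_(j < k) W (x j), p.2 + \sum_(j < k) A (x j)))) /=.
rewrite -(big_ffunS _ (fun s (x : {ffun 'I_k -> S}) =>
  G (W s * \prod_(j < k) W (x j), A s + \sum_(j < k) A (x j)))).
apply: eq_bigr => y _; rewrite big_ord_recl [in RHS]big_ord_recl.
by congr (G (_ * _, _ + _)); apply: eq_bigr => j _; rewrite ffunE.
Qed.

Lemma expR_half_ln (x : R) : 0 < x -> expR (2^-1 * ln x) = Num.sqrt x.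
Proof. by move=> x_gt0; rewrite -powR12_sqrt ?ltW // /powR gt_eqF. Qed.

Section Encoding.
Context {S : finType} (P Q : S -> R).

Definition enc_weight (s : S) : R := Num.sqrt (P s * Q s).
Definition enc_atom (s : S) : R := 2^-1 * ln (P s / Q s).

Lemma encoding_indexed : indexed_by (encoding P Q) enc_weight enc_atom.
Proof.
move=> G; rewrite /encoding big_flatten big_map big_enum /=.
by apply: eq_bigr => s _; rewrite /dscale /ddirac /= big_seq1 mulr1.
Qed.

Lemma enc_weight_expR (s : S) :
  0 < P s -> 0 < Q s -> enc_weight s * expR (enc_atom s) = P s.
Proof.
move=> Ps Qs.
rewrite /enc_weight /enc_atom expR_half_ln ?divr_gt0 //.
rewrite -sqrtrM ?mulr_ge0 ?ltW //.
have -> : P s * Q s * (P s / Q s) = P s ^+ 2 by field; rewrite gt_eqF.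
by rewrite sqrtr_sqr gtr0_norm.
Qed.

End Encoding.

Lemma enc_weightC (S : finType) (P Q : S -> R) : enc_weight P Q =1 enc_weight Q P.
Proof. by move=> s; rewrite /enc_weight mulrC. Qed.

Lemma enc_atomN (S : finType) (P Q : S -> R) (s : S) :
  0 < P s -> 0 < Q s -> - enc_atom P Q s = enc_atom Q P s.
Proof.
by move=> Ps Qs; rewrite /enc_atom -mulrN -lnV ?posrE ?divr_gt0 // invf_div.
Qed.

Lemma enc_weight_expRN (S : finType) (P Q : S -> R) (s : S) :
  0 < P s -> 0 < Q s -> enc_weight P Q s * expR (- enc_atom P Q s) = Q s.
Proof.
by move=> Ps Qs; rewrite enc_atomN // enc_weightC enc_weight_expR.
Qed.

Lemma eta_bar_indexed {Omega : finType} {n : nat} {P Q : 'I_n -> Omega -> R} :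
  (0 < n)%N -> (forall i w, 0 < P i w) -> (forall i w, 0 < Q i w) ->
  indexed_by (eta_bar P Q)
    (enc_weight (Lambda P) (Lambda Q)) (enc_atom (Lambda P) (Lambda Q)).
Proof.
move=> n_gt0 P_gt0 Q_gt0 G.
have n_pos : (0 : R) < n%:R by rewrite ltr0n.
rewrite /eta_bar /dscale big_map big_flatten big_map big_enum /=.
under eq_bigr => i _ do
  rewrite (encoding_indexed (P i) (Q i) (fun p => G (n%:R^-1 * p.1, p.2))).
rewrite pair_big /=; apply: eq_bigr => -[i w] _.
rewrite /enc_weight /enc_atom /Lambda /=; congr (G (_, _)).
  have -> : P i w / n%:R * (Q i w / n%:R) = (P i w * Q i w) * n%:R^-1 ^+ 2.
    by rewrite expr2; field; rewrite gt_eqF.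
  rewrite [RHS]sqrtrM ?mulr_ge0 ?ltW // sqrtr_sqr gtr0_norm ?invr_gt0 //.
  by rewrite mulrC.
by congr (_ * ln _); field; rewrite !gt_eqF.
Qed.

Lemma prod_norm_expR_sub (I : Type) (r : seq I) (w a : I -> R) :
  (forall i, 0 <= w i) ->
  (\prod_(i <- r) w i) *
    `|expR (\sum_(i <- r) a i) - expR (- \sum_(i <- r) a i)| =
  `|\prod_(i <- r) (w i * expR (a i)) - \prod_(i <- r) (w i * expR (- a i))|.
Proof.
move=> w_ge0; rewrite -[\prod_(i <- r) w i]ger0_norm ?prodr_ge0 // -normrM.
by rewrite mulrBr -sumrN !expR_sum -!big_split.
Qed.

End DiscreteMeasures.

Theorem theorem3 (R : realType) (Omega : finType) (n : nat)
  (P Q : 'I_n -> Omega -> R) :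
  (0 < n)%N ->
  (forall i, is_pos_pmf (P i)) ->
  (forall i, is_pos_pmf (Q i)) ->
  dmeas_eq (encoding (Lambda P) (Lambda Q)) (eta_bar P Q) /\
  Tfun (dconv_pow (eta_bar P Q) n) =
    TV (prod_pmf n (Lambda P)) (prod_pmf n (Lambda Q)).
Proof.
move=> n_gt0 /all_and2[P_gt0 _] /all_and2[Q_gt0 _].
have Lambda_gt0 (F : 'I_n -> Omega -> R) :
    (forall i w, 0 < F i w) -> forall iw, 0 < Lambda F iw.
  by move=> F_gt0 iw; rewrite divr_gt0 ?ltr0n.
have eta_bar_ix := eta_bar_indexed n_gt0 P_gt0 Q_gt0.
split; first exact: dmeas_eq_indexed (encoding_indexed _ _) eta_bar_ix.
rewrite (Tfun_indexed (dconv_pow_indexed n eta_bar_ix)) /TV /prod_pmf.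
congr (_ * _); apply: eq_bigr => x _.
rewrite mulrC prod_norm_expR_sub => [|j]; last exact: sqrtr_ge0.
congr `|_ - _|; apply: eq_bigr => j _.
  by rewrite enc_weight_expR ?Lambda_gt0.
by rewrite enc_weight_expRN ?Lambda_gt0.
Qed.
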